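(* Let $G$ and $H$ be finite abelian groups. Then $G\cong H$ if and only if there exist an integer $r\geq 1$ and integers $m_1,\dots,m_r,n_1,\dots,n_r\geq 2$ such that $\gcd(m_1,m_2,\dots,m_r)=\gcd(n_1,n_2,\dots,n_r)$ and the subgroup lattices $L(G^{m_i})$ and $L(H^{n_i})$ are isomorphic for every $i=1,\dots,r$.
   Context: For a group $K$, $L(K)$ denotes the lattice of all subgroups of $K$ ordered by inclusion, and $K^n$ denotes the direct product of $n$ copies of $K$. Isomorphism of subgroup lattices means isomorphism as lattices. *)

From HB Require Import structures.
From mathcomp Require Import all_boot all_fingroup.
Set Implicit Arguments. Unset Strict Implicit. Unset Printing Implicit Defensive.

(* K^n : the direct product of n copies of the finite group type K,
   realised as the group of (dependent) finite functions 'I_n -> K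
   with pointwise multiplication (gproduct.v external direct product). *)
Definition gpow (K : finGroupType) (n : nat) : finGroupType :=
  {dffun forall i : 'I_n, (fun _ => K) i}.

(* The subgroup lattices L(A) and L(B) (all subgroups of the whole group,
   ordered by inclusion) are isomorphic as lattices, i.e. there is a
   bijection between subgroups which preserves and reflects inclusion
   (an order isomorphism of lattices is a lattice isomorphism). *)
Definition subgroup_lattice_iso (A B : finGroupType) : Prop :=
  exists f : {group A} -> {group B},
    bijective f /\ forall K L : {group A}, (K \subset L) = (f K \subset f L).

(* A lattice isomorphism between finite abelian groups preserves the orders of
   subgroups as soon as no subgroup of prime order is the only one of its order.
   Indeed, for distinct subgroups X, Y of prime order, X <*> Y has exactly
   #|X| + 1 subgroups of prime order when #|X| = #|Y| and exactly two
   otherwise; counting these fixes the orders of the atoms, then of all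
   p-subgroups (along chains of maximal subgroups), then of all subgroups.
   Direct powers G^m with m >= 2 satisfy the hypothesis, and since a subgroup
   lies in 'Ohm_k as soon as its order divides p^k, a lattice isomorphism
   L(G^m) ~ L(H^n) gives |'Ohm_k(G)|^m = |'Ohm_k(H)|^n for all k. Comparing
   p-adic valuations, gcd(m_i) = gcd(n_i) yields |'Ohm_k(G)| = |'Ohm_k(H)|.
   These orders determine a finite abelian group: the p-adic valuation of
   |'Ohm_(e+1)(G) : 'Ohm_e(G)| counts the invariant factors of G divisible by
   p^(e+1). *)

From mathcomp Require Import all_boot all_fingroup all_solvable.
Set Implicit Arguments. Unset Strict Implicit. Unset Printing Implicit Defensive.

Lemma nonincreasing_eq_count (s t : seq nat) :
  sorted geq s -> sorted geq t -> size s = size t ->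
  (forall e, count [pred a | e < a] s = count [pred a | e < a] t) -> s = t.
Proof.
have count_gt_head x u : path geq x u -> count [pred a | x < a] u = 0.
  move/(order_path_min (fun _ _ _ le_ba le_cb => leq_trans le_cb le_ba)).
  move/allP=> le_u; apply/eqP; rewrite -leqn0 leqNgt -has_count.
  by apply/hasPn=> a /le_u; rewrite /= -leqNgt.
elim: s t => [|x s IHs] [|y t] //= sx ty [eq_size] eq_count.
have eq_xy : x = y.
  have := eq_count x; have := eq_count y.
  rewrite !ltnn (count_gt_head x s) // (count_gt_head y t) //.
  by case: ltngtP.
rewrite -{}eq_xy in ty eq_count *; congr (_ :: _).
apply: IHs (path_sorted sx) (path_sorted ty) eq_size _ => e.
exact/addnI/(eq_count e).
Qed.

Lemma eq_of_expn_gcd (I : finType) (m n : I -> nat) (a b : nat) :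
  0 < a -> 0 < b -> 0 < \big[gcdn/0]_i m i ->
  \big[gcdn/0]_i m i = \big[gcdn/0]_i n i ->
  (forall i, a ^ m i = b ^ n i) -> a = b.
Proof.
move=> a_gt0 b_gt0 gcd_m_gt0 eq_gcd eq_pow; apply: eqn_from_log => // p.
have muln_biggcd c (F : I -> nat) :
    c * \big[gcdn/0]_i F i = \big[gcdn/0]_i (c * F i).
  exact: (big_morph _ (muln_gcdr c) (muln0 c)).
apply/eqP; rewrite -(eqn_pmul2r gcd_m_gt0) {2}eq_gcd !muln_biggcd; apply/eqP.
by apply: eq_bigr => i _; rewrite mulnC -lognX eq_pow lognX mulnC.
Qed.

Section AbelianType.
Variable gT : finGroupType.
Implicit Types (A : {set gT}) (G : {group gT}).

Lemma count_logn_abelian_type p e G : abelian G ->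
  count [pred a | e < a] (map (logn p) (abelian_type G))
    = logn p #|'Ohm_e.+1(G) : 'Ohm_e(G)|%g.
Proof.
case/abelian_structure=> b defG <-; rewrite -map_comp count_map.
exact: count_logn_dprod_cycle.
Qed.

Lemma sorted_logn_abelian_type p A :
  sorted geq (map (logn p) (abelian_type A)).
Proof.
rewrite sorted_map.
apply: sub_in_sorted (abelian_type_gt1 A) (abelian_type_dvdn_sorted A).
by move=> a c a_gt1 _ /= dv_ca; apply: dvdn_leq_log (ltnW a_gt1) dv_ca.
Qed.

End AbelianType.

Lemma abelian_isog_card_Ohm (gT hT : finGroupType)
    (G : {group gT}) (H : {group hT}) :
  abelian G -> abelian H -> #|G| = #|H| ->
  (forall k, #|'Ohm_k(G)%g| = #|'Ohm_k(H)%g|) -> G \isog H.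
Proof.
move=> cGG cHH eq_card eq_Ohm; rewrite eq_abelian_type_isog //; apply/eqP.
have eq_size : size (abelian_type G) = size (abelian_type H).
  rewrite !size_abelian_type // /rank eq_card; apply: eq_bigr => p _.
  by rewrite !p_rank_abelian // eq_Ohm.
have eq_logn p : map (logn p) (abelian_type G) = map (logn p) (abelian_type H).
  apply: nonincreasing_eq_count; rewrite ?size_map ?sorted_logn_abelian_type //.
  move=> e; rewrite !count_logn_abelian_type // -!divgS ?Ohm_leq //.
  by rewrite !eq_Ohm.
apply: (@eq_from_nth _ 1) => // i lt_i_G.
have lt_i_H : i < size (abelian_type H) by rewrite -eq_size.
have nth_gt0 (T : finGroupType) (K : {group T}) j :
    j < size (abelian_type K) -> 0 < nth 1 (abelian_type K) j.
  by move=> lt_j; apply/ltnW/(allP (abelian_type_gt1 K)); rewrite mem_nth.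
apply: eqn_from_log; rewrite ?nth_gt0 // => p.
by rewrite -!(nth_map 1 0) ?eq_logn.
Qed.

Local Open Scope group_scope.

Lemma prime_card_atomP (gT : finGroupType) (K : {group gT}) :
  prime #|K| <->
  ~~ (K \subset [1]) /\
  forall L : {group gT}, L \subset K -> L \subset [1] \/ K \subset L.
Proof.
split=> [pK | [ntK minK]].
  split=> [|L sLK]; first by rewrite subG1 trivg_card_le1 -ltnNge prime_gt1.
  case/primeP: pK => _ /(_ _ (cardSg sLK))/orP[/eqP card_L | /eqP card_L].
    by left; rewrite subG1 trivg_card_le1 card_L.
  have eLK : L :=: K by apply/eqP; rewrite eqEcard sLK card_L leqnn.
  by right; rewrite eLK.
have K_gt1 : 1 < #|K| by rewrite ltnNge -trivg_card_le1 -subG1.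
have p_pr := pdiv_prime K_gt1.
have [x Kx ox] := Cauchy p_pr (pdiv_dvd _).
have sxK : <[x]> \subset K by rewrite cycle_subG.
have [sx1 | sKx] := minK _ sxK.
  by rewrite subG1 trivg_card_le1 -orderE ox leqNgt prime_gt1 in sx1.
have eKx : K :=: <[x]> by apply/eqP; rewrite eqEcard sKx subset_leq_card.
by rewrite eKx -orderE ox.
Qed.

Definition prime_subgroups (gT : finGroupType) (A : {set gT}) :=
  [set Z : {group gT} | (Z \subset A) && prime #|Z|].

Section LatticeIsomorphism.
Variables (A B : finGroupType).
Variables (f : {group A} -> {group B}) (g : {group B} -> {group A}).
Hypotheses (gK : cancel g f)
  (fS : forall K L : {group A}, (K \subset L) = (f K \subset f L)).

Lemma lattice_iso_inj : injective f.
Proof.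
move=> K L eqKL; apply/val_inj/eqP.
by rewrite eqEsubset (fS K) (fS L) eqKL !subxx.
Qed.

Lemma lattice_iso_cancel : cancel f g.
Proof. by move=> K; apply: lattice_iso_inj; rewrite gK. Qed.

Lemma lattice_iso_invS (K L : {group B}) : (K \subset L) = (g K \subset g L).
Proof. by rewrite fS !gK. Qed.

Lemma lattice_iso1 : f 1%G = 1%G.
Proof. by apply/trivGP; have := sub1G (g 1%G); rewrite fS gK. Qed.

Lemma lattice_isoT : f [set: A]%G = [set: B]%G.
Proof.
apply/val_inj/eqP; rewrite eqEsubset subsetT /=.
by have := fS (g [set: B]%G) [set: A]%G; rewrite gK subsetT.
Qed.

Lemma lattice_iso_sub1 (K : {group A}) : (f K \subset [1]) = (K \subset [1]).
Proof. by rewrite (fS K 1%G) lattice_iso1. Qed.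

Lemma lattice_isoY (K L : {group A}) : f (K <*> L)%G = (f K <*> f L)%G.
Proof.
apply/val_inj/eqP; rewrite eqEsubset join_subG -!fS joing_subl joing_subr.
rewrite -(gK (f K <*> f L)%G) -fS join_subG (fS K) (fS L) gK.
by rewrite joing_subl joing_subr.
Qed.

Lemma lattice_iso_prime (K : {group A}) : prime #|f K| = prime #|K|.
Proof.
apply/idP/idP => /prime_card_atomP[ntK minK]; apply/prime_card_atomP.
  split=> [|L]; first by rewrite -lattice_iso_sub1.
  rewrite fS => /minK[]; first by left; rewrite -lattice_iso_sub1.
  by right; rewrite fS.
split=> [|L]; first by rewrite lattice_iso_sub1.
rewrite -(gK L) -fS => /minK[]; first by left; rewrite lattice_iso_sub1.
by right; rewrite -fS.
Qed.

Lemma card_lattice_iso_prime_subgroups (K : {group A}) :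
  #|prime_subgroups (f K)| = #|prime_subgroups K|.
Proof.
rewrite -(card_imset _ lattice_iso_inj); apply: eq_card => Z.
rewrite (can2_imset_pre _ lattice_iso_cancel gK) !inE -{1}(gK Z) -fS.
congr (_ && _).
by rewrite -{1}(gK Z) lattice_iso_prime.
Qed.

Lemma lattice_iso_maximal (M K : {group A}) :
  maximal M K -> maximal (f M) (f K).
Proof.
have fP (U V : {group A}) : (U \proper V) = (f U \proper f V).
  by rewrite /proper -!fS.
case/maxgroupP; rewrite fP => ltMK maxM; apply/maxgroupP; split=> // H.
rewrite -(gK H) -fP -fS => ltHK sMH.
by congr f; apply: val_inj; apply: maxM.
Qed.

End LatticeIsomorphism.

Definition no_unique_prime_subgroup (gT : finGroupType) :=
  forall X : {group gT}, prime #|X| ->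
  exists2 Y : {group gT}, #|Y| = #|X| & Y != X.

Lemma card_prime_subgroups_join (gT : finGroupType) (X Y : {group gT}) :
  prime #|X| -> prime #|Y| -> X != Y -> Y \subset 'C(X) ->
  #|prime_subgroups (X <*> Y)| = if #|X| == #|Y| then (#|X|).+1 else 2.
Proof.
move=> pX pY neXY cXY.
have tiXY : X :&: Y = 1.
  apply: (prime_TIg pX); apply: contra neXY => sXY.
  have /eqP card_XY : #|X| == #|Y| by rewrite -(dvdn_prime2 pX pY) cardSg.
  by rewrite -val_eqE /= eqEcard sXY card_XY leqnn.
have defE := dprodEY cXY tiXY; have card_E := dprod_card defE.
have dvd_prime_E (Z : {group gT}) : Z \subset X <*> Y -> prime #|Z| ->
    (#|Z| == #|X|) || (#|Z| == #|Y|).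
  move=> sZE pZ; have := cardSg sZE.
  by rewrite -card_E Euclid_dvdM // !dvdn_prime2.
case: eqP => [eq_XY | neq_XY].
  set p := #|X| in pX eq_XY dvd_prime_E *.
  have abelE : p.-abelem (X <*> Y).
    by rewrite (dprod_abelem _ defE) !prime_abelem.
  have E2 : (X <*> Y)%G \in 'E_p^2(X <*> Y).
    by apply/pnElemP; rewrite -card_E -eq_XY mulnn pfactorK.
  rewrite -(card_p1Elem_p2Elem E2) p1ElemE //; apply: eq_card => Z.
  rewrite !inE; apply: andb_id2l => sZE; apply/idP/eqP=> [pZ | ->] //.
  by apply/eqP; have := dvd_prime_E Z sZE pZ; rewrite -eq_XY orbb.
have cycE : cyclic (X <*> Y).
  rewrite (cyclic_dprod defE) ?prime_cyclic // prime_coprime // dvdn_prime2 //.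
  exact/eqP.
suff -> : prime_subgroups (X <*> Y) = [set X; Y] by rewrite cards2 neXY.
apply/setP => Z.
rewrite !inE; apply/idP/orP => [ZE | [] /eqP->]; last 2 first.
- by rewrite joing_subl.
- by rewrite joing_subr.
have /andP[sZE pZ] := ZE.
have [eqZX | eqZY] := orP (dvd_prime_E Z sZE pZ); [left | right];
  by rewrite -val_eqE /= (eq_subG_cyclic cycE sZE) ?joing_subl ?joing_subr.
Qed.

Section OrderPreservation.
Variables (A B : finGroupType).
Variables (f : {group A} -> {group B}) (g : {group B} -> {group A}).
Hypotheses (gK : cancel g f)
  (fS : forall K L : {group A}, (K \subset L) = (f K \subset f L)).
Hypotheses (cA : abelian [set: A]) (cB : abelian [set: B])
  (nuA : no_unique_prime_subgroup A).

Lemma lattice_iso_card_prime (X : {group A}) : prime #|X| -> #|f X| = #|X|.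
Proof.
move=> pX; have [Y oY neYX] := nuA pX.
have pY : prime #|Y| by rewrite oY.
have nefXY : f X != f Y by rewrite eq_sym (inj_eq (lattice_iso_inj fS)).
have := card_lattice_iso_prime_subgroups gK fS (X <*> Y)%G.
rewrite (lattice_isoY gK fS).
rewrite card_prime_subgroups_join ?(lattice_iso_prime gK fS) //;
  last exact: sub_abelian_cent2 cB (subsetT _) (subsetT _).
rewrite card_prime_subgroups_join 1?eq_sym ?oY ?eqxx //;
  last exact: sub_abelian_cent2 cA (subsetT _) (subsetT _).
case: eqP => [_ [] // | _ two_eq].
by have := prime_gt1 pX; case: two_eq => <-.
Qed.

Lemma lattice_iso_pgroup (p : nat) (K : {group A}) :
  p.-group K -> p.-group (f K).
Proof.
move=> pK; apply/pgroupP => q q_pr q_dv.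
have [y Ky oy] := Cauchy q_pr q_dv.
have sZK : g <[y]>%G \subset K by rewrite fS gK cycle_subG.
have pZ : prime #|g <[y]>%G|.
  by rewrite -(lattice_iso_prime gK fS) gK /= -orderE oy.
have := pgroupS sZK pK; rewrite /pgroup -(lattice_iso_card_prime pZ) gK /=.
by rewrite -orderE oy pnatE.
Qed.

Lemma lattice_iso_card_pgroup (p : nat) (K : {group A}) :
  p.-group K -> #|f K| = #|K|.
Proof.
elim: {K}_.+1 {-2}K (ltnSn #|K|) => // n IHn K leKn pK.
have [K1 | ntK] := eqsVneq K 1.
  by rewrite (_ : K = 1%G) ?(lattice_iso1 gK fS) ?cards1 //; apply: val_inj.
have [M maxM _] : {M : {group A} | maximal M K & [1 A] \subset M}.
  by apply: maxgroup_exists; rewrite proper1G.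
have [ltMK _] := maxgroupP maxM; have sMK := proper_sub ltMK.
have sfMK : f M \subset f K by rewrite -fS.
have maxfM := lattice_iso_maximal gK fS maxM.
rewrite -(Lagrange sMK) -(Lagrange sfMK) (p_maximal_index pK maxM).
rewrite (p_maximal_index (lattice_iso_pgroup pK) maxfM) (IHn M) ?(pgroupS sMK) //.
exact: leq_trans (proper_card ltMK) leKn.
Qed.

Lemma lattice_iso_partn_le (p : nat) (K : {group A}) : #|K|`_p <= #|f K|`_p.
Proof.
have [P sylP] := Sylow_exists p K; have [sPK pP _] := and3P sylP.
rewrite -(card_Hall sylP) -(lattice_iso_card_pgroup pP).
rewrite -(part_pnat_id (lattice_iso_pgroup pP)).
by rewrite dvdn_leq ?part_gt0 ?partn_dvd ?cardSg // -fS.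
Qed.

End OrderPreservation.

Lemma lattice_iso_card (A B : finGroupType) (f : {group A} -> {group B})
    (g : {group B} -> {group A}) :
  cancel g f -> (forall K L : {group A}, (K \subset L) = (f K \subset f L)) ->
  abelian [set: A] -> abelian [set: B] ->
  no_unique_prime_subgroup A -> no_unique_prime_subgroup B ->
  forall K, #|f K| = #|K|.
Proof.
move=> gK fS cA cB nuA nuB K; apply: eqn_from_log => // p.
rewrite -logn_part -[RHS]logn_part; congr (logn p _); apply/eqP.
rewrite eqn_leq (lattice_iso_partn_le gK fS cA cB nuA) /=.
have fK := lattice_iso_cancel gK fS.
have gS := lattice_iso_invS gK fS.
by rewrite -{2}(fK K) (lattice_iso_partn_le fK gS cB cA nuB).
Qed.

Lemma pfactor_card_sub_Ohm (gT : finGroupType) (G K : {group gT}) (p k : nat) :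
  prime p -> K \subset G -> #|K| %| p ^ k -> K \subset 'Ohm_k(G).
Proof.
move=> p_pr sKG dvKp; apply/subsetP => x Kx; apply: mem_gen.
rewrite inE (subsetP sKG) //=; apply/OhmPredP; exists p => //.
by apply/eqP; rewrite -order_dvdn (dvdn_trans (order_dvdG Kx)).
Qed.

Section LatticeIsoOhm.
Variables (A B : finGroupType).
Variables (f : {group A} -> {group B}) (g : {group B} -> {group A}).
Hypotheses (gK : cancel g f)
  (fS : forall K L : {group A}, (K \subset L) = (f K \subset f L))
  (fC : forall K, #|f K| = #|K|).

Lemma Ohm_sub_lattice_iso k : 'Ohm_k([set: B]) \subset f 'Ohm_k([set: A])%G.
Proof.
rewrite gen_subG; apply/subsetP => y; rewrite !inE /= => /OhmPredP[p p_pr yp].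
rewrite -cycle_subG.
have -> : <[y]> = f (g <[y]>%G) :> {set B} by rewrite gK.
rewrite -fS (pfactor_card_sub_Ohm p_pr (subsetT _)) //.
by rewrite -fC gK /= -orderE order_dvdn yp.
Qed.

End LatticeIsoOhm.

Lemma card_Ohm_lattice_iso (A B : finGroupType) (f : {group A} -> {group B})
    (g : {group B} -> {group A}) :
  cancel g f -> (forall K L : {group A}, (K \subset L) = (f K \subset f L)) ->
  (forall K, #|f K| = #|K|) ->
  forall k, #|'Ohm_k([set: A])| = #|'Ohm_k([set: B])|.
Proof.
move=> gK fS fC k.
have fK := lattice_iso_cancel gK fS.
have gC K : #|g K| = #|K| by rewrite -{2}(gK K) fC.
apply/eqP; rewrite eqn_leq -{2}(fC 'Ohm_k([set: A])%G).
rewrite (subset_leq_card (Ohm_sub_lattice_iso gK fS fC k)) andbT.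
rewrite -(gC 'Ohm_k([set: B])%G) subset_leq_card //.
exact: (Ohm_sub_lattice_iso fK (lattice_iso_invS gK fS) gC).
Qed.

Section DirectPower.
Variables (G : finGroupType) (m : nat).

Lemma gpow_expgn (x : gpow G m) k i : (x ^+ k) i = x i ^+ k.
Proof. by elim: k => [|k IHk]; rewrite ?oneg_ffun // !expgS mulg_ffun IHk. Qed.

Lemma setT_gpow : [set: gpow G m] = setXn (fun=> [set: G]).
Proof.
by apply/setP => x; rewrite !inE; apply/esym/forallP => i; rewrite inE.
Qed.

Lemma card_gpow : #|[set: gpow G m]| = (#|[set: G]| ^ m)%N.
Proof. by rewrite setT_gpow cardsXn prod_nat_const card_ord. Qed.

Lemma abelian_gpow : abelian [set: G] -> abelian [set: gpow G m].
Proof.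
move=> cGG; apply/centsP => x _ y _; apply/ffunP => i.
by rewrite !mulg_ffun; apply: (centsP cGG); rewrite inE.
Qed.

Lemma Ohm_gpow k : 'Ohm_k([set: gpow G m]) = setXn (fun=> 'Ohm_k([set: G])).
Proof.
apply/eqP; rewrite eqEsubset; apply/andP; split.
  rewrite gen_subG; apply/subsetP => x.
  rewrite !inE /= => /OhmPredP[p p_pr xp].
  apply/forallP => i; apply: mem_gen; rewrite !inE /=; apply/OhmPredP.
  by exists p => //; rewrite -gpow_expgn xp oneg_ffun.
rewrite -setXn_prod; apply: prod_subG => i _.
rewrite -morphim_dfung1; apply: subset_trans (morphim_Ohm _ _ (subsetT _)) _.
by apply: OhmS; rewrite subsetT.
Qed.

Lemma card_Ohm_gpow k :
  #|'Ohm_k([set: gpow G m])| = (#|'Ohm_k([set: G])| ^ m)%N.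
Proof. by rewrite Ohm_gpow cardsXn prod_nat_const card_ord. Qed.

Lemma no_unique_prime_subgroup_gpow :
  1 < m -> no_unique_prime_subgroup (gpow G m).
Proof.
move=> m_gt1 X pX.
have [y _ oy] : {y | y \in [set: G] & #[y] = #|X|}.
  apply: (Cauchy pX); have := cardSg (subsetT X).
  by rewrite card_gpow Euclid_dvdX // => /andP[].
pose i0 : 'I_m := Ordinal (ltnW m_gt1); pose i1 : 'I_m := Ordinal m_gt1.
pose e (i : 'I_m) : gpow G m := @dfung1 _ (fun=> G) i y.
have o_e i : #[e i] = #|X|.
  by rewrite (order_injm (@injm_dfung1 _ (fun=> G) i)) ?inE.
have e0_notin : e i0 \notin <[e i1]>.
  apply/cycleP => -[k /(congr1 (fun x : gpow G m => x i0))].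
  rewrite gpow_expgn dfung1_id dfung1_dflt // expg1n => y1.
  by move: pX; rewrite -oy y1 order1.
have [eq0 | ne0] := eqVneq <[e i0]>%G X; last first.
  by exists <[e i0]>%G; rewrite /= -?orderE ?o_e.
exists <[e i1]>%G; rewrite /= -?orderE ?o_e // -eq0.
by apply: contraNneq e0_notin => /(congr1 val) /= ->; apply: cycle_id.
Qed.

End DirectPower.

Lemma isog_subgroup_lattice_iso (A B : finGroupType) :
  [set: A] \isog [set: B] -> subgroup_lattice_iso A B.
Proof.
case/isogP=> F injF imF; exists (fun K => (F @* K)%G); split.
  exists (fun K => (F @*^-1 K)%G) => K; apply/val_inj => /=.
    by rewrite injmK ?subsetT.
  by rewrite morphpreK // imF subsetT.
by move=> K L; rewrite /= injmSK ?subsetT.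
Qed.

Lemma isog_gpow (gT hT : finGroupType) (m : nat) :
  [set: gT] \isog [set: hT] -> [set: gpow gT m] \isog [set: gpow hT m].
Proof.
case/isogP=> phi injphi imphi.
pose F (x : gpow gT m) : gpow hT m := [ffun i => phi (x i)].
have FM : {in [set: gpow gT m] &, {morph F : x y / x * y}}.
  by move=> x y _ _; apply/ffunP => i; rewrite !ffunE morphM ?inE.
apply/isogP; exists (Morphism FM).
  apply/injmP => x y _ _ /ffunP eqFxy; apply/ffunP => i.
  by apply: (injmP injphi); rewrite ?inE //; have := eqFxy i; rewrite !ffunE.
apply/eqP; rewrite eqEsubset subsetT; apply/subsetP => z _.
apply/morphimP; exists [ffun i => invm injphi (z i)]; rewrite ?inE //.
by apply/ffunP => i; rewrite /= /F !ffunE invmK // imphi inE.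
Qed.

Local Close Scope group_scope.

Theorem theorem3 (gT hT : finGroupType)
  (abG : abelian [set: gT]) (abH : abelian [set: hT]) :
  [set: gT] \isog [set: hT] <->
  exists (r : nat) (m n : 'I_r -> nat),
    [/\ 1 <= r,
        forall i, 2 <= m i /\ 2 <= n i,
        \big[gcdn/0]_(i < r) m i = \big[gcdn/0]_(i < r) n i
      & forall i, subgroup_lattice_iso (gpow gT (m i)) (gpow hT (n i))].
Proof.
split=> [isoGH | [r [m [n [r_gt0 mn_ge2 eq_gcd lat]]]]].
  exists 1, (fun=> 2), (fun=> 2); split=> // i.
  exact/isog_subgroup_lattice_iso/isog_gpow.
have eq_pow i : #|[set: gT]| ^ m i = #|[set: hT]| ^ n i /\
    forall k, #|'Ohm_k([set: gT])%g| ^ m i = #|'Ohm_k([set: hT])%g| ^ n i.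
  have [f [[g _ gK] fS]] := lat i; have [m_ge2 n_ge2] := mn_ge2 i.
  have fC := lattice_iso_card gK fS (abelian_gpow _ abG) (abelian_gpow _ abH)
    (no_unique_prime_subgroup_gpow m_ge2) (no_unique_prime_subgroup_gpow n_ge2).
  split=> [|k]; last by rewrite -!card_Ohm_gpow (card_Ohm_lattice_iso gK fS fC).
  by rewrite -!card_gpow -(fC [set: _]%G) (lattice_isoT gK fS).
have gcd_m_gt0 : 0 < \big[gcdn/0]_(i < r) m i.
  have [m_ge2 _] := mn_ge2 (Ordinal r_gt0).
  by apply: dvdn_gt0 (ltnW m_ge2) (biggcdn_inf (Ordinal r_gt0) isT (dvdnn _)).
apply: abelian_isog_card_Ohm => // [|k];
  apply: (eq_of_expn_gcd (cardG_gt0 _) (cardG_gt0 _) gcd_m_gt0 eq_gcd) => i.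
- by case: (eq_pow i).
- by case: (eq_pow i) => _ ->.
Qed.
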